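(* Let $a_1\ge\cdots\ge a_n$ and $b_1\ge\cdots\ge b_n$ be real numbers such that for every $1\le i<n$, either $\min(a_i,b_i)\ge\max(a_{i+1},b_{i+1})$ or $\{a_i,b_i\}=\{a_{i+1},b_{i+1}\}$; suppose further that $\sum_{i=1}^n a_i=\sum_{i=1}^n b_i$, $\sum_{i=1}^n a_i^2=\sum_{i=1}^n b_i^2$, and \[ \sum_{i=1}^j(a_i-a_j)(a_i-b_j)\ge\sum_{i=1}^j(b_i-a_j)(b_i-b_j)\quad\text{for all }1\le j\le n. \] Then $\sum_{i=1}^n f(a_i)\ge\sum_{i=1}^n f(b_i)$ for every three times differentiable $f:I\to\mathbb{R}$ with $f'''\ge 0$, where $I$ is any interval containing all the $a_i$ and $b_i$. *)

From Stdlib Require Import Reals.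
Open Scope R_scope.

Fixpoint sum1 (j : nat) (g : nat -> R) : R :=
  match j with
  | O => 0
  | S k => sum1 k g + g (S k)
  end.

Definition is_interval (I : R -> Prop) : Prop :=
  forall x y z, I x -> I y -> x <= z <= y -> I z.

(* f is three times differentiable on I (derivatives taken relative to I,
   so one-sided at endpoints belonging to I), with f''' >= 0 on I. *)
Definition thrice_diff_f3_nonneg (f : R -> R) (I : R -> Prop) : Prop :=
  exists f1 f2 f3 : R -> R,
    forall x, I x ->
      D_in f f1 I x /\ D_in f1 f2 I x /\ D_in f2 f3 I x /\ 0 <= f3 x.

(* For x, t put
   T x t = f x - f t - f' t (x - t) - f'' t (x - t)^2 / 2 when t <= x and 0
   otherwise.  Then d/dt T x t = - f''' t (x - t)_+^2 / 2, so
   G t = sum_i (T a_i t - T b_i t) has derivative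
   - f''' t / 2 * sum_i ((a_i - t)_+^2 - (b_i - t)_+^2).  If the last sum is
   nonnegative, G is nonincreasing; G vanishes above all points, while below
   all points it equals sum f(a_i) - sum f(b_i) because the sums and the sums
   of squares agree.  Hence sum f(a_i) >= sum f(b_i).

   The prefix excess L_p t = sum_(i<=p) (a_i-t)^2-(b_i-t)^2
   is affine in t; the hypothesis on j says L_j >= 0 at the midpoint of
   (a_j, b_j), and L_j also agrees with L_(j-1) there, so L_p >= 0 between the
   midpoints of consecutive pairs.  For a fixed t, the pairs split into a
   prefix lying above t, a block of identical pairs straddling t, and a tail
   lying below t; this reduces sum_i ((a_i - t)_+^2 - (b_i - t)_+^2) >= 0 to the
   nonnegativity of L_p on gaps, plus a two-point inequality for the block. *)

From Stdlib Require Import Reals Lra Lia Psatz Classical.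
Open Scope R_scope.

Lemma sum1_ext n g h : (forall i, (1 <= i <= n)%nat -> g i = h i) -> sum1 n g = sum1 n h.
Proof.
  induction n as [|n IH]; intros H; simpl; [reflexivity|].
  rewrite IH by (intros; apply H; lia). rewrite (H (S n)) by lia. reflexivity.
Qed.

Lemma sum1_split p k g : sum1 (p + k) g = sum1 p g + sum1 k (fun i => g (p + i)%nat).
Proof.
  induction k as [|k IH]; simpl; [rewrite Nat.add_0_r; ring|].
  rewrite Nat.add_succ_r; simpl. rewrite IH. ring.
Qed.

Lemma sum1_const k c : sum1 k (fun _ => c) = INR k * c.
Proof. induction k as [|k IH]; cbn [sum1]; [simpl; ring|]. rewrite IH, S_INR. ring. Qed.

Lemma sum1_zero k g : (forall i, (1 <= i <= k)%nat -> g i = 0) -> sum1 k g = 0.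
Proof. intros H. rewrite (sum1_ext k g (fun _ => 0)) by auto. rewrite sum1_const; ring. Qed.

Lemma sum1_scal k c g : sum1 k (fun i => c * g i) = c * sum1 k g.
Proof. induction k as [|k IH]; cbn [sum1]; [ring|]. rewrite IH. ring. Qed.

Lemma first_fail (P : nat -> Prop) : (forall i, P i \/ ~ P i) -> forall n,
  exists p, (p <= n)%nat /\ (forall i, (1 <= i <= p)%nat -> P i) /\ ((p < n)%nat -> ~ P (S p)).
Proof.
  intros Hd n. induction n as [|n [p [H1 [H2 H3]]]].
  - exists 0%nat. repeat split; intros; lia.
  - destruct (Nat.eq_dec p n) as [->|Hne].
    + destruct (Hd (S n)) as [HP|HP].
      * exists (S n). repeat split; try lia. intros i Hi.
        destruct (Nat.eq_dec i (S n)) as [->|]; [exact HP|apply H2; lia].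
      * exists n. repeat split; auto.
    + exists p. repeat split; [lia|exact H2|]. intros _. apply H3. lia.
Qed.

Lemma D_in_E f d D x : D_in f d D x <->
  forall eps, eps > 0 -> exists alp, alp > 0 /\ forall y, D y -> y <> x ->
    Rabs (y - x) < alp -> Rabs ((f y - f x) / (y - x) - d x) < eps.
Proof.
  unfold D_in, limit1_in, limit_in, D_x; simpl; unfold Rdist. split.
  - intros H eps He. destruct (H eps He) as [alp [Ha H2]].
    exists alp; split; [exact Ha|]. intros y Dy Ny Hy. apply H2. auto.
  - intros H eps He. destruct (H eps He) as [alp [Ha H2]].
    exists alp; split; [exact Ha|]. intros y [[Dy Ny] Hy]. apply H2; auto.
Qed.

Lemma D_in_val f d1 d2 D x : d1 x = d2 x -> D_in f d1 D x -> D_in f d2 D x.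
Proof. intros E H. unfold D_in in *. rewrite <- E. exact H. Qed.

Lemma D_in_local f g d D x : D x ->
  (exists del, del > 0 /\ forall y, D y -> Rabs (y - x) < del -> g y = f y) ->
  D_in f d D x -> D_in g d D x.
Proof.
  intros Dx [del [Hd Hfg]] H. apply D_in_E. intros eps He.
  destruct (proj1 (D_in_E _ _ _ _) H eps He) as [alp [Ha Hq]].
  exists (Rmin alp del). split; [apply Rmin_glb_lt; lra|].
  intros y Dy Ny Hy.
  assert (Hy1 : Rabs (y - x) < alp) by (eapply Rlt_le_trans; [exact Hy|apply Rmin_l]).
  assert (Hy2 : Rabs (y - x) < del) by (eapply Rlt_le_trans; [exact Hy|apply Rmin_r]).
  rewrite (Hfg y Dy Hy2), (Hfg x Dx ltac:(rewrite Rminus_diag, Rabs_R0; lra)).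
  apply Hq; auto.
Qed.

Lemma D_in_sum (n : nat) (g g' : nat -> R -> R) I t :
  (forall i, D_in (g i) (g' i) I t) ->
  D_in (fun s => sum1 n (fun i => g i s)) (fun s => sum1 n (fun i => g' i s)) I t.
Proof.
  intros H. induction n as [|n IH]; simpl; [apply Dconst|apply Dadd; auto].
Qed.

Lemma local_slope (h h' : R -> R) (D : R -> Prop) s eps :
  D_in h h' D s -> h' s <= 0 -> eps > 0 ->
  exists alp, alp > 0 /\ forall y, D y -> Rabs (y - s) < alp ->
    (s <= y -> h y <= h s + eps * (y - s)) /\ (y <= s -> h s <= h y + eps * (s - y)).
Proof.
  intros Hd Hs He.
  destruct (proj1 (D_in_E _ _ _ _) Hd eps He) as [alp [Ha Hq]].
  exists alp; split; [exact Ha|]. intros y Dy Hy.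
  destruct (Req_dec y s) as [->|Hne]; [split; intros; lra|].
  specialize (Hq y Dy Hne Hy).
  set (q := (h y - h s) / (y - s)) in Hq.
  assert (Eq : h y - h s = q * (y - s)) by (unfold q; field; lra).
  apply Rabs_def2 in Hq. split; intros; nra.
Qed.

(* Real induction along [a, b]: the supremum of the points up to which
   [h y <= h a + eps (y - a)] holds is [b] and the bound holds there. *)
Lemma nonincreasing_eps (h h' : R -> R) (D : R -> Prop) (a b eps : R) :
  a <= b -> eps > 0 -> (forall x, a <= x <= b -> D x) ->
  (forall x, a <= x <= b -> D_in h h' D x /\ h' x <= 0) ->
  h b <= h a + eps * (b - a).
Proof.
  intros Hab He HD Hd.
  set (E := fun x => a <= x <= b /\ forall y, a <= y <= x -> h y <= h a + eps * (y - a)).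
  assert (Ea : E a) by (split; [lra|intros y Hy; replace y with a by lra; lra]).
  assert (Eb : bound E) by (exists b; intros x [Hx _]; lra).
  destruct (completeness E Eb (ex_intro _ a Ea)) as [s [Hub Hlub]].
  assert (as_ : a <= s) by (apply Hub; exact Ea).
  assert (sb : s <= b) by (apply Hlub; intros x [Hx _]; lra).
  assert (below_s : forall y, a <= y < s -> h y <= h a + eps * (y - a)).
  { intros y Hy. destruct (classic (exists x, E x /\ y < x)) as [[x [[_ Hx] Hyx]]|Hn].
    - apply Hx. lra.
    - exfalso. enough (s <= y) by lra. apply Hlub. intros x Ex.
      destruct (Rle_lt_dec x y); auto. exfalso; apply Hn. eauto. }
  destruct (local_slope h h' D s eps (proj1 (Hd s (conj as_ sb))) (proj2 (Hd s (conj as_ sb))) He)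
    as [alp [Hal Hslope]].
  assert (at_s : h s <= h a + eps * (s - a)).
  { destruct (Req_dec s a) as [->|Hsa]; [lra|].
    set (y := Rmax a (s - alp / 2)).
    assert (a <= y) by apply Rmax_l.
    assert (y < s) by (apply Rmax_lub_lt; lra).
    assert (s - alp / 2 <= y) by apply Rmax_r.
    assert (h s <= h y + eps * (s - y))
      by (apply (Hslope y (HD y ltac:(lra)) ltac:(rewrite Rabs_left; lra)); lra).
    specialize (below_s y ltac:(lra)). lra. }
  enough (s = b) by (subst s; exact at_s).
  destruct (Req_dec s b) as [|Hsb]; [assumption|exfalso].
  set (y := Rmin b (s + alp / 2)).
  assert (y <= b) by apply Rmin_l.
  assert (s < y) by (apply Rmin_glb_lt; lra).
  assert (y <= s + alp / 2) by apply Rmin_r.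
  assert (Ey : E y).
  { split; [lra|]. intros z Hz. destruct (Rlt_le_dec z s); [apply below_s; lra|].
    assert (h z <= h s + eps * (z - s))
      by (apply (Hslope z (HD z ltac:(lra)) ltac:(rewrite Rabs_right; lra)); lra).
    lra. }
  specialize (Hub y Ey). lra.
Qed.

Lemma nonincreasing_of_deriv (h h' : R -> R) (D : R -> Prop) (a b : R) :
  a <= b -> (forall x, a <= x <= b -> D x) ->
  (forall x, a <= x <= b -> D_in h h' D x /\ h' x <= 0) -> h b <= h a.
Proof.
  intros Hab HD Hd.
  destruct (Rle_lt_dec (h b) (h a)) as [|Hlt]; [assumption|].
  destruct (Req_dec a b) as [->|Hne]; [lra|].
  pose proof (nonincreasing_eps h h' D a b ((h b - h a) / (2 * (b - a))) Hab
    ltac:(apply Rdiv_lt_0_compat; lra) HD Hd) as Hb.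
  replace ((h b - h a) / (2 * (b - a)) * (b - a)) with ((h b - h a) / 2) in Hb
    by (field; lra).
  lra.
Qed.

Definition pos_sq (u : R) := Rmax u 0 * Rmax u 0.

Lemma pos_sq_pos u : 0 <= u -> pos_sq u = u * u.
Proof. intros. unfold pos_sq. rewrite Rmax_left by lra. reflexivity. Qed.

Lemma pos_sq_neg u : u <= 0 -> pos_sq u = 0.
Proof. intros. unfold pos_sq. rewrite Rmax_right by lra. ring. Qed.

Section Taylor.
Variables (f f1 f2 f3 : R -> R) (I : R -> Prop).
Hypothesis Hf : forall x, I x ->
  D_in f f1 I x /\ D_in f1 f2 I x /\ D_in f2 f3 I x /\ 0 <= f3 x.

Definition taylor_rem (x t : R) :=
  f x - f t - f1 t * (x - t) - (/2) * (f2 t * ((x - t) * (x - t))).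

(* d/dt of the remainder telescopes to the third-derivative term. *)
Lemma taylor_rem_deriv x t : I t ->
  D_in (fun s => taylor_rem x s) (fun s => - (/2) * (f3 s * ((x - s) * (x - s)))) I t.
Proof.
  intros It. destruct (Hf t It) as [H1 [H2 [H3 _]]].
  unfold taylor_rem. eapply D_in_val; cycle 1.
  { apply Dminus. apply Dminus. apply Dminus. apply Dconst. exact H1.
    apply Dmult. exact H2. apply Dminus. apply Dconst. apply Dx.
    apply Dmult. apply Dconst. apply Dmult. exact H3.
    apply Dmult; (apply Dminus; [apply Dconst|apply Dx]). }
  simpl. field.
Qed.

(* The remainder cut off to [t <= x]; it is differentiable in [t] because the
   remainder vanishes to second order at [t = x]. *)
Definition trunc_rem (x t : R) := if Rle_dec t x then taylor_rem x t else 0.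

Lemma trunc_rem_deriv x t : I t ->
  D_in (fun s => trunc_rem x s) (fun s => - (/2) * (f3 s * pos_sq (x - s))) I t.
Proof.
  intros It. destruct (Rtotal_order t x) as [Hlt|[Heq|Hgt]].
  - eapply D_in_val; cycle 1.
    { apply (D_in_local (fun s => taylor_rem x s)); [exact It| |apply taylor_rem_deriv; auto].
      exists (x - t). split; [lra|]. intros y _ Hy. unfold trunc_rem.
      destruct (Rle_dec y x); [reflexivity|]. apply Rabs_def2 in Hy. lra. }
    rewrite pos_sq_pos by lra. reflexivity.
  - subst t. apply D_in_E. intros eps He.
    destruct (proj1 (D_in_E _ _ _ _) (taylor_rem_deriv x x It) eps He) as [alp [Ha Hq]].
    exists alp. split; [exact Ha|]. intros y Dy Ny Hy.
    rewrite Rminus_diag, pos_sq_neg by lra.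
    assert (E0 : taylor_rem x x = 0) by (unfold taylor_rem; ring).
    unfold trunc_rem at 2. destruct (Rle_dec x x) as [_|]; [|lra]. rewrite E0.
    unfold trunc_rem. destruct (Rle_dec y x).
    + specialize (Hq y Dy Ny Hy). rewrite E0, Rminus_diag, Rmult_0_r in Hq. exact Hq.
    + replace ((0 - 0) / (y - x) - - / 2 * (f3 x * 0)) with 0 by (field; lra).
      rewrite Rabs_R0; lra.
  - eapply D_in_val; cycle 1.
    { apply (D_in_local (fun _ => 0)); [exact It| |apply Dconst].
      exists (t - x). split; [lra|]. intros y _ Hy. unfold trunc_rem.
      destruct (Rle_dec y x); [|reflexivity]. apply Rabs_def2 in Hy. lra. }
    rewrite pos_sq_neg by lra. ring.
Qed.

Lemma trunc_rem_right x t : x <= t -> trunc_rem x t = 0.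
Proof.
  intros H. unfold trunc_rem. destruct (Rle_dec t x); [|reflexivity].
  replace t with x by lra. unfold taylor_rem. ring.
Qed.

Lemma trunc_rem_left x t : t <= x -> trunc_rem x t = taylor_rem x t.
Proof. intros H. unfold trunc_rem. destruct (Rle_dec t x); [reflexivity|lra]. Qed.

Lemma sum_taylor_rem k (a b : nat -> R) t :
  sum1 k (fun i => taylor_rem (a i) t - taylor_rem (b i) t) =
  sum1 k (fun i => f (a i)) - sum1 k (fun i => f (b i)) - f1 t * (sum1 k a - sum1 k b)
  - / 2 * f2 t * ((sum1 k (fun i => a i ^ 2) - sum1 k (fun i => b i ^ 2))
                  - 2 * t * (sum1 k a - sum1 k b)).
Proof. induction k as [|k IH]; cbn [sum1]; [ring|]. rewrite IH. unfold taylor_rem. ring. Qed.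

Lemma third_order_comparison (n : nat) (a b : nat -> R) (m M : R) :
  m <= M -> (forall x, m <= x <= M -> I x) ->
  (forall i, (1 <= i <= n)%nat -> m <= a i <= M /\ m <= b i <= M) ->
  sum1 n a = sum1 n b ->
  sum1 n (fun i => a i ^ 2) = sum1 n (fun i => b i ^ 2) ->
  (forall t, m <= t <= M -> 0 <= sum1 n (fun i => pos_sq (a i - t) - pos_sq (b i - t))) ->
  sum1 n (fun i => f (b i)) <= sum1 n (fun i => f (a i)).
Proof.
  intros mM HI Hbd Hsum Hsq Hdom.
  set (G := fun s => sum1 n (fun i => trunc_rem (a i) s - trunc_rem (b i) s)).
  assert (G_mono : G M <= G m).
  { apply (nonincreasing_of_deriv G
      (fun s => - (/2) * f3 s * sum1 n (fun i => pos_sq (a i - s) - pos_sq (b i - s))) I);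
      [exact mM|exact HI|].
    intros x Hx. specialize (HI x Hx). split.
    - apply (D_in_val _
        (fun s => sum1 n (fun i => - (/2) * f3 s * (pos_sq (a i - s) - pos_sq (b i - s)))));
        [apply sum1_scal|].
      apply (D_in_sum n (fun i s => trunc_rem (a i) s - trunc_rem (b i) s)). intros i.
      eapply D_in_val; [|apply Dminus; apply trunc_rem_deriv; exact HI]. simpl. ring.
    - destruct (Hf x HI) as [_ [_ [_ H3]]].
      pose proof (Rmult_le_pos _ _ H3 (Hdom x Hx)). lra. }
  assert (G_top : G M = 0).
  { apply sum1_zero. intros i Hi. destruct (Hbd i Hi) as [[_ H1] [_ H2]].
    rewrite !trunc_rem_right by auto. ring. }
  assert (G_bottom : G m = sum1 n (fun i => f (a i)) - sum1 n (fun i => f (b i))).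
  { unfold G. rewrite (sum1_ext n _ (fun i => taylor_rem (a i) m - taylor_rem (b i) m)).
    - rewrite sum_taylor_rem, Hsum, Hsq. ring.
    - intros i Hi. destruct (Hbd i Hi) as [[H1 _] [H2 _]].
      rewrite !trunc_rem_left by auto. reflexivity. }
  lra.
Qed.

End Taylor.

(* The two-point inequality behind a block of equal pairs (x, y) straddling
   [t]: [A - 2 s B] is the prefix excess before the block, and the block adds
   [k ((x - s)^2 - (y - s)^2)] to it. *)
Lemma block_ineq (A B k x y t : R) : 0 <= k -> Rmin x y < t < Rmax x y ->
  (forall s, (x + y) / 2 <= s <= Rmax x y -> 0 <= A - 2 * s * B) ->
  (forall s, Rmin x y <= s <= (x + y) / 2 ->
     0 <= A - 2 * s * B + k * ((x - s) * (x - s) - (y - s) * (y - s))) ->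
  0 <= A - 2 * t * B + k * (pos_sq (x - t) - pos_sq (y - t)).
Proof.
  intros Hk Ht Hbefore Hafter. unfold Rmin, Rmax in *.
  destruct (Rle_dec x y) as [Hxy|Hxy].
  - (* x < t < y: the target is an affine combination of the two endpoint values *)
    rewrite (pos_sq_neg (x - t)), (pos_sq_pos (y - t)) by lra.
    pose proof (Hbefore y ltac:(lra)) as Ey. pose proof (Hafter x ltac:(lra)) as Ex.
    assert (Id : (y - x) * (A - 2 * t * B + k * (0 - (y - t) * (y - t))) =
       (y - t) * (A - 2 * x * B + k * ((x - x) * (x - x) - (y - x) * (y - x)))
       + (t - x) * (A - 2 * y * B) + k * ((y - x) * ((y - t) * (t - x)))) by ring.
    assert (0 <= k * ((y - x) * ((y - t) * (t - x)))).
    { apply Rmult_le_pos; [exact Hk|]. apply Rmult_le_pos; [lra|]. apply Rmult_le_pos; lra. }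
    apply (Rmult_le_reg_l (y - x)); [lra|]. rewrite Rmult_0_r, Id. nra.
  -
    rewrite (pos_sq_pos (x - t)), (pos_sq_neg (y - t)) by lra.
    assert (0 <= k * ((x - t) * (x - t))) by (apply Rmult_le_pos; nra).
    assert (0 <= k * ((y - t) * (y - t))) by (apply Rmult_le_pos; nra).
    destruct (Rle_dec ((x + y) / 2) t).
    + pose proof (Hbefore t ltac:(lra)). lra.
    + pose proof (Hafter t ltac:(lra)). lra.
Qed.

Section Truncated_squares.
Variables (n : nat) (a b : nat -> R).
Hypothesis ha : forall i, (1 <= i < n)%nat -> a (S i) <= a i.
Hypothesis hb : forall i, (1 <= i < n)%nat -> b (S i) <= b i.
Hypothesis hab : forall i, (1 <= i < n)%nat ->
     Rmin (a i) (b i) >= Rmax (a (S i)) (b (S i)) \/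
     ((a i = a (S i) /\ b i = b (S i)) \/ (a i = b (S i) /\ b i = a (S i))).
Hypothesis hsum : sum1 n a = sum1 n b.
Hypothesis hsq : sum1 n (fun i => a i ^ 2) = sum1 n (fun i => b i ^ 2).
Hypothesis hj : forall j, (1 <= j <= n)%nat ->
     sum1 j (fun i => (a i - a j) * (a i - b j)) >=
     sum1 j (fun i => (b i - a j) * (b i - b j)).

Definition excess p t := sum1 p (fun i => (a i - t) * (a i - t) - (b i - t) * (b i - t)).
Definition mid i := (a i + b i) / 2.
Definition lo i := Rmin (a i) (b i).
Definition hi i := Rmax (a i) (b i).

(* [excess p] is affine in [t], so nonnegativity at two points propagates between them. *)
Lemma excess_affine p t : excess p t =
  (sum1 p (fun i => a i ^ 2) - sum1 p (fun i => b i ^ 2)) - 2 * t * (sum1 p a - sum1 p b).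
Proof. unfold excess. induction p as [|p IH]; cbn [sum1]; [ring|]. rewrite IH. ring. Qed.

Lemma excess_between p u v t : u <= t <= v -> 0 <= excess p u -> 0 <= excess p v ->
  0 <= excess p t.
Proof.
  rewrite !excess_affine. intros Ht Hu Hv.
  destruct (Rle_lt_dec 0 (sum1 p a - sum1 p b)); nra.
Qed.

Lemma excess_full t : excess n t = 0.
Proof. rewrite excess_affine, hsq, hsum. ring. Qed.

(* The hypothesis [hj] says exactly that [excess j] is nonnegative at [mid j]. *)
Lemma excess_at_mid j : (1 <= j <= n)%nat -> 0 <= excess j (mid j).
Proof.
  intros Hj. specialize (hj j Hj).
  assert (Id : forall k, sum1 k (fun i => (a i - a j) * (a i - b j))
      - sum1 k (fun i => (b i - a j) * (b i - b j)) = excess k (mid j)).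
  { intros k. unfold excess, mid. induction k as [|k IH]; simpl; [ring|].
    rewrite <- IH. field. }
  rewrite <- Id. lra.
Qed.

Lemma excess_prev_mid k : excess (S k) (mid (S k)) = excess k (mid (S k)).
Proof. unfold excess at 1. cbn [sum1]. fold (excess k (mid (S k))). unfold mid. field. Qed.

Lemma excess_gap p t : (1 <= p < n)%nat -> mid (S p) <= t <= mid p -> 0 <= excess p t.
Proof.
  intros Hp Ht. apply (excess_between p (mid (S p)) (mid p)); [exact Ht| |].
  - rewrite <- excess_prev_mid. apply excess_at_mid. lia.
  - apply excess_at_mid. lia.
Qed.

Lemma antitone i j : (1 <= i <= j)%nat -> (j <= n)%nat -> a j <= a i /\ b j <= b i.
Proof.
  intros Hij Hjn. induction j as [|j IH]; [lia|].
  destruct (Nat.eq_dec i (S j)) as [->|Hne]; [lra|].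
  destruct IH as [H1 H2]; try lia.
  split; [apply Rle_trans with (a j)|apply Rle_trans with (b j)]; auto;
    [apply ha|apply hb]; lia.
Qed.

Lemma lo_antitone i j : (1 <= i <= j)%nat -> (j <= n)%nat -> lo j <= lo i.
Proof.
  intros H1 H2. destruct (antitone i j H1 H2). unfold lo, Rmin.
  repeat destruct Rle_dec; lra.
Qed.

Lemma hi_antitone i j : (1 <= i <= j)%nat -> (j <= n)%nat -> hi j <= hi i.
Proof.
  intros H1 H2. destruct (antitone i j H1 H2). unfold hi, Rmax.
  repeat destruct Rle_dec; lra.
Qed.

Lemma pair_step i : (1 <= i < n)%nat -> hi (S i) <= lo i \/ (a (S i) = a i /\ b (S i) = b i).
Proof.
  intros Hi. destruct (hab i Hi) as [H|[[H1 H2]|[H1 H2]]].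
  - left. unfold hi, lo. lra.
  - right. split; congruence.
  - right. pose proof (ha i Hi). pose proof (hb i Hi). split; lra.
Qed.

Lemma lo_le_mid i : lo i <= mid i.
Proof. unfold lo, mid, Rmin. destruct Rle_dec; lra. Qed.

Lemma mid_le_hi i : mid i <= hi i.
Proof. unfold hi, mid, Rmax. destruct Rle_dec; lra. Qed.

Lemma hi_next_le_mid p t : (1 <= p < n)%nat -> t <= lo p -> lo (S p) < t ->
  hi (S p) <= mid p.
Proof.
  intros Hp Hlo Hlo'. pose proof (lo_le_mid p).
  destruct (pair_step p Hp) as [|[E1 E2]]; [lra|].
  unfold lo in *. rewrite E1, E2 in Hlo'. lra.
Qed.

Lemma mid_next_le_lo r t : (1 <= r < n)%nat -> hi (S r) <= t -> t < hi r ->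
  mid (S r) <= lo r.
Proof.
  intros Hr Hhi Hhi'. pose proof (mid_le_hi (S r)).
  destruct (pair_step r Hr) as [|[E1 E2]]; [lra|].
  unfold hi in *. rewrite E1, E2 in Hhi. lra.
Qed.

Definition trunc_gap t i := pos_sq (a i - t) - pos_sq (b i - t).

Lemma prefix_gap p t : (forall i, (1 <= i <= p)%nat -> t <= lo i) ->
  sum1 p (trunc_gap t) = excess p t.
Proof.
  intros H. apply sum1_ext. intros i Hi. specialize (H i Hi).
  unfold trunc_gap, lo, Rmin in *. rewrite !pos_sq_pos; destruct Rle_dec; lra.
Qed.

Lemma tail_gap r t : (r <= n)%nat -> ((r < n)%nat -> hi (S r) <= t) ->
  sum1 (n - r) (fun i => trunc_gap t (r + i)%nat) = 0.
Proof.
  intros Hr Ht. apply sum1_zero. intros i Hi.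
  assert (Hh : hi (r + i) <= hi (S r)) by (apply hi_antitone; lia).
  specialize (Ht ltac:(lia)). unfold trunc_gap. unfold hi, Rmax in Hh, Ht.
  rewrite !pos_sq_neg; repeat destruct Rle_dec; lra.
Qed.

Lemma block_const p k t : (p + k <= n)%nat -> lo (S p) < t ->
  (forall i, (1 <= i <= k)%nat -> t < hi (p + i)) ->
  forall i, (1 <= i <= k)%nat -> a (p + i)%nat = a (S p) /\ b (p + i)%nat = b (S p).
Proof.
  intros Hk Hlo Hhi i Hi. induction i as [|i IH]; [lia|].
  destruct (Nat.eq_dec i 0) as [->|Hi0]; [rewrite Nat.add_1_r; auto|].
  destruct IH as [IH1 IH2]; [lia|].
  rewrite Nat.add_succ_r.
  destruct (pair_step (p + i) ltac:(lia)) as [Hs|[Hs1 Hs2]]; [exfalso|split; congruence].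
  assert (t < hi (p + S i)) by (apply Hhi; lia).
  assert (lo (p + i) <= lo (S p)) by (apply lo_antitone; lia).
  rewrite Nat.add_succ_r in *. lra.
Qed.

Lemma straddle_block_nonneg p k t : (1 <= k)%nat -> (p + k <= n)%nat ->
  (forall i, (1 <= i <= p)%nat -> t <= lo i) -> lo (S p) < t ->
  (forall i, (1 <= i <= k)%nat -> t < hi (p + i)) ->
  ((p + k < n)%nat -> hi (S (p + k)) <= t) ->
  0 <= excess p t + sum1 k (fun i => trunc_gap t (p + i)%nat).
Proof.
  intros Hk Hpk Habove Hlo Hstraddle Hbelow.
  set (r := (p + k)%nat) in *. set (x := a (S p)). set (y := b (S p)).
  assert (Hhi : t < hi (S p)) by (rewrite <- Nat.add_1_r; apply Hstraddle; lia).
  pose proof (block_const p k t Hpk Hlo Hstraddle) as Hblock.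
  assert (Hmiddle : sum1 k (fun i => trunc_gap t (p + i)%nat)
      = INR k * (pos_sq (x - t) - pos_sq (y - t))).
  { rewrite <- sum1_const. apply sum1_ext. intros i Hi.
    unfold trunc_gap. destruct (Hblock i Hi) as [-> ->]. reflexivity. }
  assert (Hexcess_r : forall s,
      excess r s = excess p s + INR k * ((x - s) * (x - s) - (y - s) * (y - s))).
  { intros s. unfold excess at 1, r. rewrite sum1_split. f_equal.
    rewrite <- sum1_const. apply sum1_ext. intros i Hi.
    destruct (Hblock i Hi) as [-> ->]. reflexivity. }
  destruct (Hblock k ltac:(lia)) as [Ek1 Ek2]. fold r in Ek1, Ek2.
  rewrite Hmiddle, excess_affine.
  apply block_ineq; [apply pos_INR|exact (conj Hlo Hhi)| |].
  - intros s Hs. rewrite <- excess_affine.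
    destruct (Nat.eq_dec p 0) as [->|Hp0]; [unfold excess; simpl; lra|].
    pose proof (hi_next_le_mid p t ltac:(lia) (Habove p ltac:(lia)) Hlo).
    apply excess_gap; [lia|]. unfold mid, hi, x, y in *. lra.
  - intros s Hs. rewrite <- excess_affine, <- Hexcess_r.
    destruct (Nat.eq_dec r n) as [->|Hrn]; [rewrite excess_full; lra|].
    assert (Hsr : t < hi r) by (apply Hstraddle; lia).
    pose proof (mid_next_le_lo r t ltac:(unfold r in *; lia) (Hbelow ltac:(lia)) Hsr).
    apply excess_gap; [unfold r in *; lia|].
    unfold lo, mid, x, y in *. rewrite Ek1, Ek2 in *. lra.
Qed.

(* The key dominance [sum (a_i - t)_+^2 >= sum (b_i - t)_+^2]: split the pairs
   into those above [t] (length p), those straddling it (length k) and the rest. *)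
Lemma trunc_gap_nonneg t : 0 <= sum1 n (trunc_gap t).
Proof.
  destruct (first_fail (fun i => t <= lo i)
    ltac:(intros i; destruct (Rle_dec t (lo i)); tauto) n) as [p [Hpn [Habove Hnot]]].
  destruct (first_fail (fun i => t < hi (p + i))
    ltac:(intros i; destruct (Rlt_dec t (hi (p + i))); tauto) (n - p))
    as [k [Hkn [Hstraddle Hbelow]]].
  assert (Hbelow' : (p + k < n)%nat -> hi (S (p + k)) <= t).
  { intros Hr. apply Rnot_lt_le. rewrite <- Nat.add_succ_r. apply Hbelow. lia. }
  replace n with (p + k + (n - (p + k)))%nat at 1 by lia.
  rewrite !sum1_split, prefix_gap, tail_gap by (auto; lia).
  rewrite Rplus_0_r.
  destruct (Nat.eq_dec k 0) as [->|Hk0].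
  - (* no straddling pair: t lies in the gap after pair p *)
    simpl. rewrite Rplus_0_r, Nat.add_0_r in *.
    destruct (Nat.eq_dec p 0) as [->|Hp0]; [unfold excess; simpl; lra|].
    destruct (Nat.eq_dec p n) as [->|Hpn']; [rewrite excess_full; lra|].
    apply excess_gap; [lia|]. pose proof (mid_le_hi (S p)). pose proof (lo_le_mid p).
    pose proof (Habove p ltac:(lia)). pose proof (Hbelow' ltac:(lia)). lra.
  - apply straddle_block_nonneg; auto; [lia|lia|].
    apply Rnot_le_lt, Hnot. lia.
Qed.

End Truncated_squares.

Theorem mainTheorem12 (n : nat) (a b : nat -> R)
  (ha : forall i, (1 <= i < n)%nat -> a (S i) <= a i)
  (hb : forall i, (1 <= i < n)%nat -> b (S i) <= b i)
  (hab : forall i, (1 <= i < n)%nat ->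
     Rmin (a i) (b i) >= Rmax (a (S i)) (b (S i)) \/
     ((a i = a (S i) /\ b i = b (S i)) \/ (a i = b (S i) /\ b i = a (S i))))
  (hsum : sum1 n a = sum1 n b)
  (hsq : sum1 n (fun i => a i ^ 2) = sum1 n (fun i => b i ^ 2))
  (hj : forall j, (1 <= j <= n)%nat ->
     sum1 j (fun i => (a i - a j) * (a i - b j)) >=
     sum1 j (fun i => (b i - a j) * (b i - b j)))
  (I : R -> Prop) (hI : is_interval I)
  (haI : forall i, (1 <= i <= n)%nat -> I (a i))
  (hbI : forall i, (1 <= i <= n)%nat -> I (b i))
  (f : R -> R) (hf : thrice_diff_f3_nonneg f I) :
  sum1 n (fun i => f (a i)) >= sum1 n (fun i => f (b i)).
Proof.
  destruct hf as [f1 [f2 [f3 Hf]]].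
  destruct (Nat.eq_dec n 0) as [->|Hn0]; [simpl; lra|].
  set (m := Rmin (a n) (b n)). set (M := Rmax (a 1%nat) (b 1%nat)).
  assert (Hbd : forall i, (1 <= i <= n)%nat -> m <= a i <= M /\ m <= b i <= M).
  { intros i Hi. destruct (antitone n a b ha hb i n ltac:(lia) ltac:(lia)).
    destruct (antitone n a b ha hb 1 i ltac:(lia) ltac:(lia)).
    unfold m, M, Rmin, Rmax. repeat destruct Rle_dec; lra. }
  assert (Im : I m) by (unfold m, Rmin; destruct Rle_dec; [apply haI|apply hbI]; lia).
  assert (IM : I M) by (unfold M, Rmax; destruct Rle_dec; [apply hbI|apply haI]; lia).
  assert (mM : m <= M) by (destruct (Hbd 1%nat ltac:(lia)); lra).
  apply Rle_ge, (third_order_comparison f f1 f2 f3 I Hf n a b m M); auto.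
  - intros x Hx. exact (hI m M x Im IM Hx).
  - intros t _. exact (trunc_gap_nonneg n a b ha hb hab hsum hsq hj t).
Qed.
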